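(* Let $n \ge 0$. If $\beta$ is a (contiguous) subword of $W$ with $|\beta| = |W_n|$ and $\beta \neq W_n$, then $d_0(W_n,\beta) > \frac16$.
   Context: Words are finite strings over $\{0,1\}$; $\alpha(i)$ is the $i$-th letter of $\alpha$ and $|\alpha|$ its length. Define $W_0 = 0$ and $W_{m+1} = W_m W_m 1 W_m$ for $m\ge0$, and let $W$ be the unique infinite word having every $W_m$ as an initial segment. For words $\alpha,\beta$ of equal length with $\alpha$ containing at least one $0$, $$d_0(\alpha,\beta) = \frac{|\{i : \alpha(i)=0 \text{ and } \beta(i)=1\}|}{|\{i : \alpha(i)=0\}|}.$$ *)

(* Letters: false = 0, true = 1. *)
From mathcomp Require Import all_boot all_order all_algebra.
Set Implicit Arguments. Unset Strict Implicit. Unset Printing Implicit Defensive.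
Import Order.TTheory GRing.Theory Num.Theory.

Fixpoint Wn (m : nat) : seq bool :=
  match m with
  | 0 => [:: false]
  | m'.+1 => Wn m' ++ Wn m' ++ true :: Wn m'
end.

(* The infinite word W : nat -> bool, having every W_m as prefix.
   Since |W_m| >= m+1, position i lies inside W_(i+1). *)
Definition W (i : nat) : bool := nth false (Wn i.+1) i.

Definition subW (k len : nat) : seq bool := mkseq (fun i => W (k + i)) len.

Definition d0 (a b : seq bool) : rat :=
  (count (fun p : bool * bool => ~~ p.1 && p.2) (zip a b))%:R
  / (count (fun x : bool => ~~ x) a)%:R.

(* In W, the copies of W_m start at the positions [blockpos m j] and consecutive
   copies are separated by single letters [sep j]; as W_(m+1) = W_m W_m 1 W_m, the
   copies at level m+1 are the copies number 3j at level m.  Shifting a copy of W_m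
   by one position, in either direction, produces at least (3^m - 1)/2 positions
   where W_m has 0 and the shifted word 1 (one per factor 01, resp. 10, of W_m), and
   one more if the separator crossed is 1.  Splitting W_(m+1) into its three copies
   of W_m, and using that no three consecutive separators are 0, an induction on m
   shows that the subword of length |W_m| at any position that does not start a
   copy has at least (3^m + 3)/6 such positions, while W_m has 3^m zeros. *)

From mathcomp Require Import all_boot all_order all_algebra.
From mathcomp Require Import zify lra.
Import Order.TTheory GRing.Theory Num.Theory.

Definition lenW m := size (Wn m).

Lemma lenWS m : lenW m.+1 = 3 * lenW m + 1.
Proof. rewrite /lenW /= !size_cat /=; lia. Qed.

Lemma lenW_gt0 m : 0 < lenW m.
Proof. by elim: m => [|m IHm] //; rewrite lenWS; lia. Qed.

Lemma ltn_lenW m : m < lenW m.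
Proof. by elim: m => [|m IHm] //; rewrite lenWS; lia. Qed.

Lemma leq_lenW : {homo lenW : m M / m <= M}.
Proof.
apply: (@homo_leq _ _ (fun x y => x <= y)) => // [y x z|m]; first exact: leq_trans.
by rewrite lenWS; lia.
Qed.

Lemma nth_WnS_first m i : i < lenW m -> nth false (Wn m.+1) i = nth false (Wn m) i.
Proof. by move=> lt_i; rewrite /= nth_cat -/(lenW m) lt_i. Qed.

Lemma nth_WnS_second m i :
  i < lenW m -> nth false (Wn m.+1) (lenW m + i) = nth false (Wn m) i.
Proof.
by move=> lt_i; rewrite /= nth_cat -/(lenW m) ltnNge leq_addr /= addKn nth_cat lt_i.
Qed.

Lemma nth_WnS_sep m : nth false (Wn m.+1) (2 * lenW m) = true.
Proof.
rewrite /= nth_cat -/(lenW m) ifN; last lia.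
rewrite nth_cat -/(lenW m) ifN; last lia.
by rewrite (_ : 2 * lenW m - lenW m - lenW m = 0) //; lia.
Qed.

Lemma nth_WnS_third m i :
  nth false (Wn m.+1) (2 * lenW m + 1 + i) = nth false (Wn m) i.
Proof.
rewrite /= nth_cat -/(lenW m) ifN; last lia.
rewrite nth_cat -/(lenW m) ifN; last lia.
by rewrite (_ : 2 * lenW m + 1 + i - lenW m - lenW m = i.+1) //; lia.
Qed.

Lemma nth_Wn0 m : nth false (Wn m) 0 = false.
Proof. by elim: m => [|m IHm] //; rewrite nth_WnS_first ?lenW_gt0. Qed.

Lemma nth_WnS_len m : nth false (Wn m.+1) (lenW m) = false.
Proof. by rewrite -[lenW m]addn0 nth_WnS_second ?lenW_gt0 // nth_Wn0. Qed.

Lemma nth_Wn_last m : nth false (Wn m) (lenW m).-1 = false.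
Proof.
elim: m => [|m IHm] //.
rewrite (_ : (lenW m.+1).-1 = 2 * lenW m + 1 + (lenW m).-1) ?nth_WnS_third //.
by rewrite lenWS; have := lenW_gt0 m; lia.
Qed.

Lemma nth_Wn_prefix m M i :
  m <= M -> i < lenW m -> nth false (Wn M) i = nth false (Wn m) i.
Proof.
move=> le_mM lt_i; elim: M le_mM => [|M IHM]; first by rewrite leqn0 => /eqP->.
rewrite leq_eqVlt ltnS => /predU1P[->//|le_mM].
by rewrite nth_WnS_first ?IHM //; apply: leq_trans lt_i _; apply: leq_lenW.
Qed.

Lemma W_prefix m i : i < lenW m -> W i = nth false (Wn m) i.
Proof.
move=> lt_i; rewrite /W -(@nth_Wn_prefix i.+1 (maxn i.+1 m)) ?leq_maxl //.
  by rewrite (@nth_Wn_prefix m) ?leq_maxr.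
exact: ltn_trans (ltn_lenW i.+1).
Qed.

Lemma mod3_ind (P : nat -> Prop) :
  (forall q, P (3 * q)) -> (forall q, P (3 * q + 1)) -> (forall q, P (3 * q + 2)) ->
  forall j, P j.
Proof.
move=> P0 P1 P2 j; rewrite (divn_eq j 3) mulnC.
by case: (j %% 3) (ltn_pmod j (isT : 0 < 3)) => [|[|[|r]]] // _; rewrite ?addn0.
Qed.

(* [sep j] is the letter of W between the j-th and the (j+1)-th copy of W_m, the
   same at every level m.  The fuel j.+1 is enough since j %/ 3 < j. *)
Fixpoint sep_rec fuel j : bool :=
  if fuel is fuel'.+1 then
    match j %% 3 with 1 => true | 2 => sep_rec fuel' (j %/ 3) | _ => false end
  else false.

Definition sep j := sep_rec j.+1 j.

Lemma sep_rec_fuel f f' j : j < f -> j < f' -> sep_rec f j = sep_rec f' j.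
Proof.
elim: f f' j => [//|f IHf] [//|f'] j lt_jf lt_jf' /=.
by case j_mod3: (j %% 3) => [|[|[|r]]] //; apply: IHf; lia.
Qed.

Lemma sep_mul3 q : sep (3 * q) = false.
Proof. by rewrite /sep /= (_ : (3 * q) %% 3 = 0) //; lia. Qed.

Lemma sep_mul3_1 q : sep (3 * q + 1) = true.
Proof. by rewrite /sep /= (_ : (3 * q + 1) %% 3 = 1) //; lia. Qed.

Lemma sep_mul3_2 q : sep (3 * q + 2) = sep q.
Proof.
rewrite {1}/sep /= (_ : (3 * q + 2) %% 3 = 2); last lia.
rewrite (_ : (3 * q + 2) %/ 3 = q); last lia.
by apply: sep_rec_fuel; lia.
Qed.

Lemma sep_01_dvd3 j : ~~ sep j -> sep j.+1 -> 3 %| j.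
Proof.
elim/mod3_ind: j => q.
- by rewrite dvdn_mulr.
- by rewrite sep_mul3_1.
- by rewrite (_ : (3 * q + 2).+1 = 3 * q.+1) ?sep_mul3 //; lia.
Qed.

Lemma sep_001 j : ~~ sep j -> ~~ sep j.+1 -> sep j.+2.
Proof.
elim/mod3_ind: j => q.
- by rewrite (_ : (3 * q).+1 = 3 * q + 1) ?sep_mul3_1 //; lia.
- by rewrite sep_mul3_1.
- by rewrite (_ : (3 * q + 2).+2 = 3 * q.+1 + 1) ?sep_mul3_1 //; lia.
Qed.

Fixpoint blockpos m j := if j is j'.+1 then blockpos m j' + lenW m + sep j' else 0.

Lemma blockposS m j : blockpos m j.+1 = blockpos m j + lenW m + sep j.
Proof. by []. Qed.

Lemma blockpos_mul3 m j : blockpos m (3 * j) = blockpos m.+1 j.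
Proof.
elim: j => [|j IHj]; first by rewrite muln0.
rewrite (_ : 3 * j.+1 = (3 * j + 2).+1); last lia.
rewrite blockposS sep_mul3_2 addn2 !blockposS sep_mul3 -[(3 * j).+1]addn1 sep_mul3_1.
by rewrite IHj lenWS; lia.
Qed.

Lemma blockpos_mul3_1 m j : blockpos m (3 * j + 1) = blockpos m.+1 j + lenW m.
Proof. by rewrite addn1 blockposS blockpos_mul3 sep_mul3 addn0. Qed.

Lemma blockpos_mul3_2 m j : blockpos m (3 * j + 2) = blockpos m.+1 j + 2 * lenW m + 1.
Proof. rewrite addn2 blockposS -addn1 blockpos_mul3_1 sep_mul3_1; lia. Qed.

Lemma leq_blockpos m j : j <= blockpos m j.
Proof. by elim: j => [|j IHj] //; rewrite blockposS; have := lenW_gt0 m; lia. Qed.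

Lemma blockpos_cover m k : exists j, blockpos m j <= k < blockpos m j.+1.
Proof.
elim: k => [|k [j /andP[le_jk lt_kj]]].
  by exists 0; rewrite /=; have := lenW_gt0 m; lia.
have [lt_kj'|le_jk'] := ltnP k.+1 (blockpos m j.+1); first by exists j; rewrite lt_kj' andbT leqW.
by exists j.+1; rewrite le_jk' blockposS; have := lenW_gt0 m; lia.
Qed.

Lemma W_blockpos m j :
  (forall i, i < lenW m -> W (blockpos m j + i) = nth false (Wn m) i)
  /\ W (blockpos m j + lenW m) = sep j.
Proof.
elim/ltn_ind: j m => j IHj m.
have [->|j_gt0] := posnP j.
  split=> [i lt_i|]; rewrite add0n; first exact: W_prefix.
  by rewrite (@W_prefix m.+1) ?nth_WnS_len // lenWS; lia.
move: j_gt0 IHj; elim/mod3_ind: j => q q_gt0 IHj.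
- have [inW _] := IHj q ltac:(lia) m.+1.
  rewrite blockpos_mul3 sep_mul3; split=> [i lt_i|].
    by rewrite inW ?nth_WnS_first // lenWS; lia.
  by rewrite inW ?nth_WnS_len // lenWS; lia.
- have [inW _] := IHj q ltac:(lia) m.+1.
  rewrite blockpos_mul3_1 sep_mul3_1; split=> [i lt_i|]; rewrite -addnA inW.
  + by rewrite nth_WnS_second.
  + by rewrite lenWS; lia.
  + by rewrite addnn -mul2n nth_WnS_sep.
  + by rewrite lenWS; lia.
- have [inW sepW] := IHj q ltac:(lia) m.+1.
  rewrite blockpos_mul3_2 sep_mul3_2; split=> [i lt_i|].
    by rewrite -nth_WnS_third -!addnA inW // lenWS; lia.
  by rewrite -sepW lenWS; congr W; lia.
Qed.

Lemma W_block m j i :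
  i < lenW m -> W (blockpos m j + i) = nth false (Wn m) i.
Proof. by case: (W_blockpos m j) => inW _; apply: inW. Qed.

Lemma W_sep m j : W (blockpos m j + lenW m) = sep j.
Proof. by case: (W_blockpos m j). Qed.

Lemma W_before_block m j : W (blockpos m j.+1).-1 = sep j.
Proof.
have L_gt0 := lenW_gt0 m; rewrite blockposS; case: (boolP (sep j)) => [sep_j|_].
  by rewrite addn1 succnK W_sep.
rewrite addn0 (_ : _.-1 = blockpos m j + (lenW m).-1); last lia.
by rewrite W_block ?nth_Wn_last //; lia.
Qed.

Lemma size_subW k n : size (subW k n) = n.
Proof. exact: size_mkseq. Qed.

Lemma subW_cat k a b : subW k (a + b) = subW k a ++ subW (k + a) b.
Proof.
rewrite /subW /mkseq iotaD map_cat add0n -{2}(addn0 a) iotaDl -map_comp.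
by congr (_ ++ _); apply: eq_map => i /=; rewrite addnA.
Qed.

Lemma subW_blockpos m j : subW (blockpos m j) (lenW m) = Wn m.
Proof.
apply: (@eq_from_nth _ false) => [|i]; rewrite size_subW // => lt_i.
by rewrite nth_mkseq // W_block.
Qed.

Definition num01 m k :=
  count (fun p : bool * bool => ~~ p.1 && p.2) (zip (Wn m) (subW k (lenW m))).

Lemma num01S m k :
  num01 m.+1 k = num01 m k + num01 m (k + lenW m) + num01 m (k + 2 * lenW m + 1).
Proof.
rewrite /num01 lenWS (_ : 3 * lenW m + 1 = lenW m + (lenW m + (1 + lenW m))); last lia.
rewrite !subW_cat /= !zip_cat ?size_subW // !count_cat /=.
by rewrite add0n mul2n -addnn !addnA.
Qed.

Lemma num01_0 k : num01 0 k = W k.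
Proof. by rewrite /num01 /= !addn0. Qed.

Lemma num01_after_block m j : 3 ^ m + 2 * sep j <= 2 * num01 m (blockpos m j + 1) + 1.
Proof.
elim: m j => [|m IHm] j; first by rewrite num01_0 (W_sep 0 j) expn0; case: sep.
rewrite num01S -blockpos_mul3 expnS.
rewrite (_ : blockpos m (3 * j) + 1 + lenW m = blockpos m (3 * j + 1) + 1); last first.
  by rewrite blockpos_mul3_1 blockpos_mul3; lia.
rewrite (_ : blockpos m (3 * j) + 1 + 2 * lenW m + 1 = blockpos m (3 * j + 2) + 1); last first.
  by rewrite blockpos_mul3_2 blockpos_mul3; lia.
have := IHm (3 * j); have := IHm (3 * j + 1); have := IHm (3 * j + 2).
rewrite sep_mul3 sep_mul3_1 sep_mul3_2; case: sep => /=; lia.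
Qed.

Lemma num01_before_block m j :
  3 ^ m + 2 * sep j <= 2 * num01 m (blockpos m j.+1).-1 + 1.
Proof.
elim: m j => [|m IHm] j.
  by rewrite num01_0 W_before_block expn0; case: sep.
set P := blockpos m.+1 j.+1.
have P_gt0 : 0 < P by rewrite /P blockposS; have := lenW_gt0 m.+1; lia.
have e0 : P = blockpos m (3 * j + 2).+1 by rewrite /P -blockpos_mul3; congr blockpos; lia.
have e1 : P + lenW m = blockpos m (3 * j.+1).+1.
  by rewrite blockposS blockpos_mul3 sep_mul3 addn0.
have e2 : P + 2 * lenW m + 1 = blockpos m (3 * j.+1 + 1).+1.
  by rewrite blockposS blockpos_mul3_1 sep_mul3_1; lia.
have := IHm (3 * j + 2); have := IHm (3 * j.+1); have := IHm (3 * j.+1 + 1).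
rewrite sep_mul3_2 sep_mul3 sep_mul3_1 -e0 -e1 -e2 num01S expnS.
rewrite (_ : P.-1 + lenW m = (P + lenW m).-1); last lia.
rewrite (_ : P.-1 + 2 * lenW m + 1 = (P + 2 * lenW m + 1).-1); last lia.
by case: sep => /=; lia.
Qed.

Definition block_start m k := has (fun j => blockpos m j == k) (iota 0 k.+1).

Lemma block_startP m k : reflect (exists j, k = blockpos m j) (block_start m k).
Proof.
apply: (iffP hasP) => [[j _ /eqP <-]|[j ->]]; first by exists j.
by exists j; rewrite // mem_iota ltnS leq_blockpos.
Qed.

Lemma block_start_blockpos m j : block_start m (blockpos m j).
Proof. by apply/block_startP; exists j. Qed.

Lemma num01_at_block_start m j :
  ~~ block_start m.+1 (blockpos m j) -> 3 ^ m.+1 + 3 <= 6 * num01 m.+1 (blockpos m j).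
Proof.
move=> not_start; rewrite num01S expnS.
have [sep_j|nsep_j] := boolP (sep j).
  rewrite (_ : blockpos m j + lenW m = (blockpos m j.+1).-1); last by rewrite blockposS sep_j; lia.
  by have := num01_before_block m j; rewrite sep_j; lia.
have [sep_j1|nsep_j1] := boolP (sep j.+1).
  have /dvdnP[q def_j] := sep_01_dvd3 _ nsep_j sep_j1.
  by rewrite def_j mulnC blockpos_mul3 block_start_blockpos in not_start.
rewrite (_ : blockpos m j + 2 * lenW m + 1 = blockpos m j.+2 + 1); last first.
  by rewrite !blockposS (negbTE nsep_j) (negbTE nsep_j1); lia.
by have := num01_after_block m j.+2; rewrite sep_001 //; lia.
Qed.

Lemma num01_off_block m k : ~~ block_start m k -> 3 ^ m + 3 <= 6 * num01 m k.
Proof.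
elim: m k => [|m IHm] k not_start.
  have [j /andP[le_jk lt_kj]] := blockpos_cover 0 k.
  have ne_kj : k != blockpos 0 j.
    by apply: contraNneq not_start => ->; apply: block_start_blockpos.
  move: lt_kj; rewrite blockposS (_ : lenW 0 = 1) //.
  case: (boolP (sep j)) => sep_j lt_kj; last by move: lt_kj ne_kj => /=; lia.
  by rewrite num01_0 (_ : k = blockpos 0 j + 1) ?(W_sep 0 j) ?sep_j //; move: lt_kj => /=; lia.
rewrite num01S expnS.
have [/block_startP[j def_k]|k_off] := boolP (block_start m k).
  by move: not_start; rewrite def_k -num01S -expnS; apply: num01_at_block_start.
have c0 := IHm _ k_off; have L_gt0 := lenW_gt0 m.
have [/block_startP[[|j] def_kL]|kL_off] := boolP (block_start m (k + lenW m)).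
- by move: def_kL => /=; lia.
- move: def_kL; rewrite blockposS; case: (boolP (sep j)) => sep_j def_kL.
    have := num01_after_block m j; rewrite sep_j (_ : blockpos m j + 1 = k); lia.
  by rewrite (_ : k = blockpos m j) ?block_start_blockpos in k_off; lia.
have c1 := IHm _ kL_off.
have [/block_startP[[|j] def_k2L]|k2L_off] := boolP (block_start m (k + 2 * lenW m + 1)).
- by move: def_k2L => /=; lia.
- move: def_k2L; rewrite blockposS; case: (boolP (sep j)) => sep_j def_k2L.
    by rewrite (_ : k + lenW m = blockpos m j) ?block_start_blockpos in kL_off; lia.
  case: j sep_j def_k2L => [|j] _ def_k2L; first by move: def_k2L => /=; lia.
  have := num01_before_block m j; rewrite (_ : (blockpos m j.+1).-1 = k + lenW m); lia.
have c2 := IHm _ k2L_off; lia.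
Qed.

Lemma count_Wn_false n : count (fun x : bool => ~~ x) (Wn n) = 3 ^ n.
Proof. by elim: n => [|n IHn] //=; rewrite !count_cat /= IHn expnS; lia. Qed.

Local Open Scope ring_scope.

Theorem lemma2 (n k : nat) :
  subW k (size (Wn n)) != Wn n ->
  (1 / 6 : rat) < d0 (Wn n) (subW k (size (Wn n))).
Proof.
rewrite -/(lenW n) => neq_sub.
have k_off : ~~ block_start n k.
  by apply: contra neq_sub => /block_startP[j ->]; rewrite subW_blockpos.
rewrite /d0 -/(num01 n k) count_Wn_false ltr_pdivlMr ?ltr0n ?expn_gt0 //.
have := num01_off_block _ _ k_off; rewrite -(ler_nat rat) natrD natrM; lra.
Qed.
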